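(* Fix $K$ and $K_T$ with $0<K_T<K$. Among all partitions $\mathcal{C}$ of $[N]$ into $K$ equally sized clusters, the set of maximizers of $\operatorname{Tr}\big(\operatorname{Var}_{\mathbf{Z}\sim\mathcal{D}(\mathcal{C})}(\mathbf{d})\big)$ equals the set of minimizers of $$\sum_{i\in[N]}\sum_{j\notin\mathcal{C}(i)}\sum_{s\in[M]}\frac{w_{is}}{\sum_{k}w_{ks}}\,\frac{w_{js}}{\sum_{k}w_{ks}},$$ where $\mathbf{d}=(d_1,\dots,d_M)$ and $\operatorname{Var}(\mathbf{d})$ is its covariance matrix.
   Context: Setting: $N$ experimental units $[N]$, $M$ interference units $[M]$, weights $w_{is}\ge0$ with $\sum_i w_{is}>0$ for all $s$. For $\mathbf{Z}\in\{-1,1\}^N$: dose $d_s=\frac{\sum_i w_{is}Z_i}{\sum_i w_{is}}$. Balanced $K$-cluster randomized design $\mathcal{D}(\mathcal{C})$: $K\ge2$ divides $N$, $\mathcal{C}$ partitions $[N]$ into $K$ clusters of size $N/K$, $\mathcal{C}(i)$ is the cluster of $i$; $K_T$ clusters chosen uniformly at random are treated ($Z_i=1$), the rest are control ($Z_i=-1$). *)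

From mathcomp Require Import all_boot all_order all_algebra.
Set Implicit Arguments. Unset Strict Implicit. Unset Printing Implicit Defensive.
Import Order.TTheory GRing.Theory Num.Theory.
Local Open Scope ring_scope.

Section Cluster.
Variables (R : realFieldType) (N M : nat).
Variable w : 'I_N -> 'I_M -> R.

Definition wsum (s : 'I_M) : R := \sum_(k < N) w k s.

Definition balanced_partition (K : nat) (P : {set {set 'I_N}}) : bool :=
  [&& partition P [set: 'I_N], #|P| == K & [forall B in P, #|B| == (N %/ K)%N]].

Definition assign (P : {set {set 'I_N}}) (T : {set {set 'I_N}}) (i : 'I_N) : R :=
  if pblock P i \in T then 1 else -1.

Definition dose P T (s : 'I_M) : R :=
  (\sum_(i < N) w i s * assign P T i) / wsum s.

(* support of the design D(C): all choices of K_T treated clusters, uniform *)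
Definition designs (P : {set {set 'I_N}}) (KT : nat) : {set {set {set 'I_N}}} :=
  [set T in powerset P | #|T| == KT].

Definition expect P KT (f : {set {set 'I_N}} -> R) : R :=
  (\sum_(T in designs P KT) f T) / #|designs P KT|%:R.

Definition var_dose P KT (s : 'I_M) : R :=
  expect P KT (fun T => dose P T s ^+ 2) - (expect P KT (fun T => dose P T s)) ^+ 2.

Definition trace_var P KT : R := \sum_(s < M) var_dose P KT s.

Definition cross_obj (P : {set {set 'I_N}}) : R :=
  \sum_(i < N) \sum_(j < N | j \notin pblock P i) \sum_(s < M)
     (w i s / wsum s) * (w j s / wsum s).

End Cluster.

From mathcomp Require Import all_boot all_order all_algebra ring zify.
Set Implicit Arguments. Unset Strict Implicit. Unset Printing Implicit Defensive.
Import Order.TTheory GRing.Theory Num.Theory.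
Local Open Scope ring_scope.

(* Normalise the weights of each interference unit to sum to one and write
   d_s = 1 - 2 U_s, where U_s is the normalised weight of the untreated units.
   Counting the designs in which one or two given clusters are untreated gives
   the first two moments of U_s in closed form: for a partition into K clusters,
   Var(d_s) equals a constant depending only on K and K_T minus
   4 (C(K-1,K_T) - C(K-2,K_T)) / C(K,K_T) times the cross-cluster sum of
   products of normalised weights for unit s.  Summing over s, the trace is a
   strictly decreasing affine function of the cross-cluster objective, so the
   two optimisation problems have the same solutions. *)

Lemma ltn_binS n m : (0 < m <= n.+1)%N -> ('C(n, m) < 'C(n.+1, m))%N.
Proof. by case: m => // m le_mn; rewrite binS -[X in (X < _)%N]addn0 ltn_add2l bin_gt0. Qed.

Lemma argmax_iff_argmin_of_antitone_affine (R : numDomainType) (T : Type)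
    (S : pred T) (f g : T -> R) (c d : R) (x0 : T) :
  0 < d -> (forall x, S x -> f x = c - d * g x) -> S x0 ->
  (forall x, S x -> f x <= f x0) <-> (forall x, S x -> g x0 <= g x).
Proof.
move=> d_gt0 fE Sx0; rewrite fE //.
by split=> opt x Sx; have := opt x Sx; rewrite fE // lerD2l lerN2 ler_pM2l.
Qed.

(* The number of designs of a K_T-out-of-n cluster randomisation in which
   k given clusters are all untreated. *)
Definition avoid_count (R : pzSemiRingType) (n KT k : nat) : R := ('C(n - k, KT))%:R.

Section DoseVariance.
Variables (R : realFieldType) (N M : nat) (w : 'I_N -> 'I_M -> R).
Hypothesis wsum_gt0 : forall s, 0 < wsum w s.

Definition wnorm i s := w i s / wsum w s.

Lemma sum_wnorm s : \sum_(i < N) wnorm i s = 1.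
Proof. by rewrite /wnorm -mulr_suml -/(wsum w s) divff // lt0r_neq0. Qed.

Definition untreated_weight P (T : {set {set 'I_N}}) s :=
  \sum_(i < N) wnorm i s * (pblock P i \notin T)%:R.

Lemma dose_untreated_weight P T s : dose w P T s = 1 - 2 * untreated_weight P T s.
Proof.
rewrite /dose /untreated_weight mulr_suml.
transitivity (\sum_(i < N) (wnorm i s - 2 * (wnorm i s * (pblock P i \notin T)%:R))).
  by apply: eq_bigr => i _; rewrite /assign /wnorm; case: (_ \in T) => /=; ring.
by rewrite sumrB sum_wnorm -mulr_sumr.
Qed.

Section Designs.
Variables (P : {set {set 'I_N}}) (KT : nat).

Lemma card_designs : #|designs P KT| = 'C(#|P|, KT).
Proof. by rewrite -cards_draws; apply: eq_card => T; rewrite !inE. Qed.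

Lemma card_designs_avoiding (B1 B2 : {set 'I_N}) : B1 \in P -> B2 \in P ->
  #|[set T in designs P KT | (B1 \notin T) && (B2 \notin T)]|
  = 'C(#|P| - (B1 != B2).+1, KT).
Proof.
move=> B1P B2P.
have B12P : [set B1; B2] \subset P by apply/subsetP => B; rewrite !inE => /orP[] /eqP ->.
rewrite -cards2 -(setIidPr B12P) -cardsD -cards_draws.
apply: eq_card => T; rewrite !inE subsetD disjoint_sym.
rewrite (@eq_disjoint _ _ (predU1 B1 (pred1 B2))); last by move=> x; rewrite !inE.
rewrite disjointU1 disjoint1.
by case: (T \subset P); case: (_ == KT); case: (B1 \in T); case: (B2 \in T).
Qed.

Lemma sum_designs_untreated2 (B1 B2 : {set 'I_N}) : B1 \in P -> B2 \in P ->
  \sum_(T in designs P KT) ((B1 \notin T)%:R * (B2 \notin T)%:R : R)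
  = avoid_count R #|P| KT (B1 != B2).+1.
Proof.
move=> B1P B2P; rewrite /avoid_count -card_designs_avoiding // -sum1_card natr_sum.
rewrite big_mkcond [RHS]big_mkcond; apply: eq_bigr => T _; rewrite [in RHS]inE.
by case: (T \in _); case: (B1 \in T); case: (B2 \in T); rewrite /= ?mulr1 ?mulr0.
Qed.

Hypothesis P_partition : partition P [set: 'I_N].

Lemma pblock_mem_partition i : pblock P i \in P.
Proof. by case/and3P: P_partition => /eqP cover_P _ _; rewrite pblock_mem // cover_P inE. Qed.

Lemma pblock_neq_partition i j : (pblock P i != pblock P j) = (j \notin pblock P i).
Proof. by case/and3P: P_partition => /eqP cover_P trivP _; rewrite eq_pblock // cover_P inE. Qed.

Let c k : R := avoid_count R #|P| KT k.

Definition cross_unit s :=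
  \sum_(i < N) \sum_(j < N | j \notin pblock P i) wnorm i s * wnorm j s.

Lemma sum_designs_untreated_weight s :
  \sum_(T in designs P KT) untreated_weight P T s = c 1.
Proof.
rewrite /untreated_weight exchange_big /=.
transitivity (\sum_(i < N) wnorm i s * c 1); last by rewrite -mulr_suml sum_wnorm mul1r.
apply: eq_bigr => i _; rewrite -mulr_sumr; congr (_ * _).
have PiP := pblock_mem_partition i.
have -> : c 1 = avoid_count R #|P| KT (pblock P i != pblock P i).+1 by rewrite eqxx.
rewrite -sum_designs_untreated2 //; apply: eq_bigr => T _.
by case: (_ \in T); rewrite /= ?mulr1 ?mulr0.
Qed.

Lemma sum_designs_untreated_weight_sqr s :
  \sum_(T in designs P KT) untreated_weight P T s ^+ 2 = c 1 - (c 1 - c 2%N) * cross_unit s.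
Proof.
have sqrE T : untreated_weight P T s ^+ 2 = \sum_(i < N) \sum_(j < N)
    (wnorm i s * wnorm j s) * ((pblock P i \notin T)%:R * (pblock P j \notin T)%:R).
  rewrite expr2 /untreated_weight mulr_suml; apply: eq_bigr => i _.
  by rewrite mulr_sumr; apply: eq_bigr => j _; ring.
rewrite (eq_bigr _ (fun T _ => sqrE T)) exchange_big /=.
transitivity (\sum_(i < N) \sum_(j < N) (c 1 * (wnorm i s * wnorm j s) -
    (c 1 - c 2%N) * (if j \notin pblock P i then wnorm i s * wnorm j s else 0))).
  apply: eq_bigr => i _; rewrite exchange_big /=; apply: eq_bigr => j _.
  rewrite -mulr_sumr sum_designs_untreated2 ?pblock_mem_partition //.
  by rewrite pblock_neq_partition /c; case: (j \in pblock P i) => /=; ring.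
have sum_prod : \sum_(i < N) wnorm i s * \sum_(j < N) wnorm j s = 1.
  by under eq_bigr do rewrite sum_wnorm mulr1; exact: sum_wnorm.
under eq_bigr do rewrite sumrB -!mulr_sumr.
rewrite sumrB -!mulr_sumr sum_prod mulr1 /cross_unit.
by congr (_ - _ * _); apply: eq_bigr => i _; rewrite [RHS]big_mkcond.
Qed.

Hypothesis KT_le : (KT <= #|P|)%N.

Lemma var_dose_affine s : var_dose w P KT s =
  (1 - ((c 0 - 2 * c 1) / c 0) ^+ 2) - 4 * (c 1 - c 2%N) / c 0 * cross_unit s.
Proof.
have c0E : c 0 = ('C(#|P|, KT))%:R by rewrite /c /avoid_count subn0.
have c0_neq0 : c 0 != 0 by rewrite c0E pnatr_eq0 -lt0n bin_gt0.
rewrite /var_dose /expect card_designs -c0E.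
under eq_bigr do rewrite dose_untreated_weight.
under [X in _ - (X / _) ^+ 2]eq_bigr do rewrite dose_untreated_weight.
have sqrE T : (1 - 2 * untreated_weight P T s) ^+ 2 =
  1 + ((-4) * untreated_weight P T s + 4 * untreated_weight P T s ^+ 2) by ring.
have linE T : 1 - 2 * untreated_weight P T s = 1 + (-2) * untreated_weight P T s by ring.
under eq_bigr do rewrite sqrE.
under [X in _ - (X / _) ^+ 2]eq_bigr do rewrite linE.
rewrite !big_split /= -!mulr_sumr sum_designs_untreated_weight.
by rewrite sum_designs_untreated_weight_sqr sumr_const card_designs -c0E; field.
Qed.

Lemma cross_obj_sum_units : cross_obj w P = \sum_(s < M) cross_unit s.
Proof.
rewrite /cross_obj /cross_unit; under eq_bigr do rewrite exchange_big /=.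
by rewrite exchange_big.
Qed.

Lemma trace_var_affine : trace_var w P KT =
  M%:R * (1 - ((c 0 - 2 * c 1) / c 0) ^+ 2) - 4 * (c 1 - c 2%N) / c 0 * cross_obj w P.
Proof.
rewrite /trace_var cross_obj_sum_units; under eq_bigr do rewrite var_dose_affine.
by rewrite sumrB sumr_const card_ord -mulr_sumr [in RHS]mulr_natl.
Qed.

End Designs.
End DoseVariance.

Theorem mainTheorem8 (R : realFieldType) (N M K KT : nat)
  (w : 'I_N -> 'I_M -> R)
  (hw0 : forall i s, 0 <= w i s)
  (hws : forall s, 0 < wsum w s)
  (hK : (2 <= K)%N) (hKN : (K %| N)%N)
  (hKT0 : (0 < KT)%N) (hKTK : (KT < K)%N)
  (P : {set {set 'I_N}}) (hP : balanced_partition K P) :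
  (forall P' : {set {set 'I_N}}, balanced_partition K P' ->
      trace_var w P' KT <= trace_var w P KT)
  <->
  (forall P' : {set {set 'I_N}}, balanced_partition K P' ->
      cross_obj w P <= cross_obj w P').
Proof.
pose c k : R := avoid_count R K KT k.
apply: (@argmax_iff_argmin_of_antitone_affine _ _ _ _ _
  (M%:R * (1 - ((c 0 - 2 * c 1) / c 0) ^+ 2)) (4 * (c 1 - c 2%N) / c 0)) => //.
- have K_1E : (K - 1 = (K - 2).+1)%N by lia.
  rewrite /c /avoid_count subn0 K_1E divr_gt0 ?mulr_gt0 ?subr_gt0 ?ltr_nat ?ltr0n //.
    by rewrite ltn_binS // hKT0 -K_1E; lia.
  by rewrite bin_gt0 ltnW.
- move=> P' /and3P[P'_partition /eqP card_P' _].
  by rewrite (trace_var_affine hws P'_partition) card_P' // ltnW.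
Qed.
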